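(* For all $n,k\in\mathbb Z$, \[ \binom{n}{k}_w=\binom{n}{n-k}_{\widehat w}\prod_{j=1}^{k}W(j,n-k), \] where $\widehat w(s,t)=w(t,s)^{-1}$.
   Context: $(w(s,t))_{s,t\in\mathbb Z}$ are commuting invertible variables. Product convention: $\prod_{j=l}^m A_j=A_l\cdots A_m$ if $m>l-1$, $=1$ if $m=l-1$, $=A_{l-1}^{-1}\cdots A_{m+1}^{-1}$ if $m<l-1$. For any such weight family $v$, set $W_v(s,t)=\prod_{j=1}^t v(s,j)$ (and $W=W_w$), and let $\binom{n}{k}_v$ ($n,k\in\mathbb Z$) be the unique family with $\binom{n}{0}_v=\binom{n}{n}_v=1$ for all $n\in\mathbb Z$ and $\binom{n+1}{k}_v=\binom{n}{k}_v+\binom{n}{k-1}_v W_v(k,n+1-k)$ for all $n,k$ with $(n+1,k)\ne(0,0)$. *)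

From HB Require Import structures.
From mathcomp Require Import all_boot all_order all_algebra.
Set Implicit Arguments. Unset Strict Implicit. Unset Printing Implicit Defensive.
Import Order.TTheory GRing.Theory Num.Theory.
Local Open Scope ring_scope.

(* Integer-bounded product with the paper's convention:
   zprod l m A = A l * ... * A m              if m > l - 1,
               = 1                            if m = l - 1,
               = A (l-1)^-1 * ... * A (m+1)^-1 if m < l - 1. *)
Definition zprod (R : comUnitRingType) (l m : int) (A : int -> R) : R :=
  if (l - 1 <= m)%R then \prod_(i < absz (m - l + 1)%R) A (l + (i : nat)%:Z)%R
  else \prod_(i < absz (l - 1 - m)%R) (A (m + 1 + (i : nat)%:Z)%R)^-1.

Definition Wt (R : comUnitRingType) (v : int -> int -> R) (s t : int) : R :=
  zprod 1 t (fun j => v s j).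

Definition what (R : comUnitRingType) (w : int -> int -> R) : int -> int -> R :=
  fun s t => (w t s)^-1.

Definition is_wbinom (R : comUnitRingType) (v : int -> int -> R)
    (B : int -> int -> R) : Prop :=
  [/\ forall n : int, B n 0 = 1,
      forall n : int, B n n = 1 &
      forall n k : int, (n + 1, k) <> (0, 0) ->
        B (n + 1) k = B n k + B n (k - 1) * Wt v k (n + 1 - k)].

From HB Require Import structures.
From mathcomp Require Import all_boot all_order all_algebra.
From mathcomp Require Import zify ring.
Set Implicit Arguments. Unset Strict Implicit. Unset Printing Implicit Defensive.
Import Order.TTheory GRing.Theory Num.Theory.
Local Open Scope ring_scope.

(* Write Wrect w n k for the product of w over the rectangle [1, k] x [1, n - k].
   The family C n k := Bh n (n - k) * Wrect w n k is itself a w-binomial family: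
   multiplying the ŵ-recurrence of Bh at (n, n + 1 - k) by Wrect w (n + 1) k
   gives the w-recurrence of C at (n, k), since the new row of the rectangle
   cancels the ŵ-weight and the new column contributes W(k, n + 1 - k).  The
   theorem then follows from uniqueness.  The difference D of two solutions
   vanishes on column 0 and on the diagonal, and as all weights are units, any
   two vanishing entries among D (n + 1) k, D n k, D n (k - 1) force the third;
   propagating along diagonals kills D off the band 0 < k < n, and then
   row by row everywhere. *)

Section IntegerProducts.
Variable R : comUnitRingType.
Implicit Types (l m : int) (A B : int -> R).

Lemma eq_zprod l m A B : A =1 B -> zprod l m A = zprod l m B.
Proof. by move=> eAB; rewrite /zprod; case: ifP => _; apply: eq_bigr => i _; rewrite eAB. Qed.

Lemma zprod1 l m : zprod l m (fun=> 1 : R) = 1.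
Proof. by rewrite /zprod; case: ifP => _; apply: big1 => i _; rewrite ?invr1. Qed.

Lemma zprod_empty l A : zprod l (l - 1) A = 1.
Proof.
rewrite /zprod lexx; have -> : l - 1 - l + 1 = 0 by ring.
by rewrite big_ord0.
Qed.

Section Units.
Variable A : int -> R.
Hypothesis A_unit : forall j, A j \is a GRing.unit.

Lemma zprod_unit l m : zprod l m A \is a GRing.unit.
Proof. by rewrite /zprod; case: ifP => _; apply: unitr_prod => i _; rewrite ?unitrV. Qed.

Lemma zprodV l m : zprod l m (fun j => (A j)^-1) = (zprod l m A)^-1.
Proof. by rewrite /zprod; case: ifP => _; rewrite prodrV // => i _; rewrite ?unitrV. Qed.

Lemma zprodM B l m : (forall j, B j \is a GRing.unit) ->
  zprod l m (fun j => A j * B j) = zprod l m A * zprod l m B.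
Proof.
move=> B_unit; rewrite /zprod; case: ifP => _; rewrite -big_split //=.
by apply: eq_bigr => i _; rewrite invrM // mulrC.
Qed.

Lemma zprodSr l m : zprod l m A = zprod l (m - 1) A * A m.
Proof.
rewrite /zprod; case: (lerP (l - 1) (m - 1)) => [lm1 | ml1].
  have -> : (l - 1 <= m) = true by lia.
  have -> : absz (m - l + 1)%R = (absz (m - 1 - l + 1)%R).+1 by lia.
  by rewrite big_ord_recr /=; congr (_ * A _); lia.
case: (lerP (l - 1) m) => [lm | ml].
  have -> : m = l - 1 by lia.
  have -> : absz (l - 1 - l + 1)%R = 0%N by lia.
  have -> : absz (l - 1 - (l - 1 - 1))%R = 1%N by lia.
  by rewrite big_ord0 big_ord1 addr0 subrK mulVr.
have -> : absz (l - 1 - (m - 1))%R = (absz (l - 1 - m)%R).+1 by lia.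
rewrite big_ord_recl addr0 subrK mulrAC mulVr ?mul1r //.
by apply: eq_bigr => i _; rewrite -addrA -PoszD.
Qed.

End Units.
End IntegerProducts.

Section Weights.
Variables (R : comUnitRingType) (v : int -> int -> R).
Hypothesis v_unit : forall s t, v s t \is a GRing.unit.

Lemma Wt_unit s t : Wt v s t \is a GRing.unit.
Proof. exact: zprod_unit. Qed.

Lemma Wt0 s : Wt v s 0 = 1.
Proof. exact: zprod_empty. Qed.

Lemma WtSr s t : Wt v s t = Wt v s (t - 1) * v s t.
Proof. exact: zprodSr. Qed.

Lemma Wt_what s t : Wt (what v) s t = (zprod 1 t (fun j => v j s))^-1.
Proof. exact: zprodV. Qed.

End Weights.

Section Homogeneous.
Variables (R : comUnitRingType) (D c : int -> int -> R).
Hypotheses (D_col0 : forall n, D n 0 = 0) (D_diag : forall n, D n n = 0).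
Hypothesis D_rec : forall n k, (n + 1, k) <> (0, 0) ->
  D (n + 1) k = D n k + D n (k - 1) * c n k.
Hypothesis c_unit : forall n k, c n k \is a GRing.unit.

(* At the excluded corner (n + 1, k) = (0, 0) the boundary values
   D 0 0 = D (-1) (-1) = 0 take over, so the next three lemmas hold everywhere. *)

Lemma vanish_down n k : D n k = 0 -> D n (k - 1) = 0 -> D (n + 1) k = 0.
Proof.
case: (eqVneq (n + 1, k) (0, 0)) => [[-> ->] | /eqP nk0]; first by rewrite D_col0.
by rewrite D_rec // => -> ->; rewrite mul0r addr0.
Qed.

Lemma vanish_right n k : D (n + 1) k = 0 -> D n (k - 1) = 0 -> D n k = 0.
Proof.
case: (eqVneq (n + 1, k) (0, 0)) => [[_ ->] | /eqP nk0]; first by rewrite D_col0.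
by rewrite D_rec // => eSn ekp; rewrite ekp mul0r addr0 in eSn.
Qed.

Lemma vanish_left n k : D (n + 1) k = 0 -> D n k = 0 -> D n (k - 1) = 0.
Proof.
case: (eqVneq (n + 1, k) (0, 0)) => [[n1 ->] | /eqP nk0].
  by have -> : n = 0 - 1 by rewrite -n1 addrK.
rewrite D_rec // => eSn ek; rewrite ek add0r in eSn.
by apply: (mulIr (c_unit n k)); rewrite eSn mul0r.
Qed.

Lemma vanish_above_diag (j : nat) n : D n (n + j%:Z) = 0.
Proof.
elim: j n => [|j IH] n; first by rewrite addr0.
rewrite intS addrA; apply: vanish_right; first exact: IH.
by rewrite addrAC addrK.
Qed.

Lemma vanish_nonpos (j : nat) n : D n (- j%:Z) = 0.
Proof.
elim: j n => [|j IH] n; first exact: D_col0.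
by rewrite intS opprD addrC; apply: vanish_left.
Qed.

Lemma homog_wbinom_eq0 n k : D n k = 0.
Proof.
have off_band n' k' : (k' <= 0) || (n' <= k') -> D n' k' = 0.
  case/orP=> [k'_le0 | n'_le_k'].
    have [j ->] : exists j : nat, k' = - j%:Z by exists (absz k'); lia.
    exact: vanish_nonpos.
  have [j ->] : exists j : nat, k' = n' + j%:Z by exists (absz (k' - n')); lia.
  exact: vanish_above_diag.
have rows_nat (m : nat) k' : D m k' = 0.
  elim: m k' => [|m IH] k'; first by apply: off_band; lia.
  by rewrite -addn1 PoszD; apply: vanish_down; apply: IH.
by case: n => m; [exact: rows_nat | apply: off_band; lia].
Qed.

End Homogeneous.

Lemma is_wbinom_uniq (R : comUnitRingType) (v : int -> int -> R) E F :
  (forall s t, v s t \is a GRing.unit) ->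
  is_wbinom v E -> is_wbinom v F -> E =2 F.
Proof.
move=> v_unit [E_col0 E_diag E_rec] [F_col0 F_diag F_rec] n k.
apply/eqP; rewrite -subr_eq0; apply/eqP.
apply: (@homog_wbinom_eq0 _ (fun n k => E n k - F n k) (fun n k => Wt v k (n + 1 - k))).
- by move=> m; rewrite E_col0 F_col0 subrr.
- by move=> m; rewrite E_diag F_diag subrr.
- by move=> m j mj; rewrite E_rec // F_rec //; ring.
- by move=> m j; apply: Wt_unit.
Qed.

Definition Wrect (R : comUnitRingType) (v : int -> int -> R) (n k : int) : R :=
  zprod 1 k (fun j => Wt v j (n - k)).

Section Duality.
Variables (R : comUnitRingType) (w : int -> int -> R).
Hypothesis w_unit : forall s t, w s t \is a GRing.unit.

Lemma Wrect_col0 n : Wrect w n 0 = 1.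
Proof. exact: zprod_empty. Qed.

Lemma Wrect_diag n : Wrect w n n = 1.
Proof. by rewrite /Wrect subrr (eq_zprod _ _ (fun j => Wt0 w j)) zprod1. Qed.

Lemma WrectSn_col n k : Wrect w (n + 1) k = Wrect w n (k - 1) * Wt w k (n + 1 - k).
Proof.
rewrite /Wrect zprodSr; last by move=> j; apply: Wt_unit.
by have -> : n - (k - 1) = n + 1 - k by ring.
Qed.

Lemma WrectSn_row n k :
  Wrect w (n + 1) k = Wrect w n k * zprod 1 k (fun j => w j (n + 1 - k)).
Proof.
rewrite /Wrect -zprodM //; last by move=> j; apply: Wt_unit.
apply: eq_zprod => j; rewrite WtSr //.
by have -> : n + 1 - k - 1 = n - k by ring.
Qed.

Lemma Wt_what_WrectSn n k :
  Wt (what w) (n + 1 - k) k * Wrect w (n + 1) k = Wrect w n k.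
Proof.
rewrite Wt_what // WrectSn_row mulrCA mulVr ?mulr1 //.
exact: zprod_unit.
Qed.

Lemma is_wbinom_dual Bh : is_wbinom (what w) Bh ->
  is_wbinom w (fun n k => Bh n (n - k) * Wrect w n k).
Proof.
move=> [Bh_col0 Bh_diag Bh_rec]; split=> [n | n | n k nk0].
- by rewrite subr0 Bh_diag Wrect_col0 mulr1.
- by rewrite subrr Bh_col0 Wrect_diag mulr1.
rewrite Bh_rec; last by case=> n1 nk; apply: nk0; congr (_, _); lia.
have -> : n + 1 - k - 1 = n - k by ring.
have -> : n + 1 - (n + 1 - k) = k by ring.
have -> : n - (k - 1) = n + 1 - k by ring.
by rewrite mulrDl -mulrA Wt_what_WrectSn WrectSn_col; ring.
Qed.

End Duality.

Theorem theorem5 (R : comUnitRingType) (w : int -> int -> R)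
    (hw : forall s t : int, w s t \is a GRing.unit)
    (B Bh : int -> int -> R) :
  is_wbinom w B -> is_wbinom (what w) Bh ->
  forall n k : int,
    B n k = Bh n (n - k) * zprod 1 k (fun j => Wt w j (n - k)).
Proof.
move=> hB hBh; apply: (is_wbinom_uniq hw hB).
exact: is_wbinom_dual.
Qed.
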